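(* Let $s\ge2$, $\eta>0$, and let $z\in\mathbb{R}_{\ge0}^s$ with $\sum_j z_j>0$ whose non-zero entries are not all equal. Let $\tilde z_k=\max\big(z_k-\eta\frac{\partial\mathcal{H}}{\partial z_k}(z),0\big)$ (with $\tilde z_k=0$ when $z_k=0$). If $i$ is an index of a smallest non-zero entry of $z$ then $\frac{\partial\mathcal{H}}{\partial z_i}(z)>0$ and $\tilde z_i<z_i$; if $k$ is an index of a largest entry of $z$ then $\frac{\partial\mathcal{H}}{\partial z_k}(z)<0$ and $\tilde z_k>z_k$.
   Context: $\mathcal{H}(z)=-\sum_i \frac{z_i}{\sum_j z_j}\log\frac{z_i}{\sum_j z_j}$ with $0\log0=0$; for $z_k>0$ the gradient is the partial derivative, and for $z_k=0$ it is regarded as $+\infty$. *)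

From HB Require Import structures.
From mathcomp Require Import all_boot all_order all_algebra.
From mathcomp Require Import all_classical all_reals all_analysis.
Set Implicit Arguments. Unset Strict Implicit. Unset Printing Implicit Defensive.
Import Order.TTheory GRing.Theory Num.Theory.
Local Open Scope ring_scope.

Definition xlnx {R : realType} (x : R) : R := if x == 0 then 0 else x * ln x.

Definition entropyH {R : realType} {s : nat} (z : 'I_s -> R) : R :=
  - \sum_(i < s) xlnx (z i / \sum_(j < s) z j).

Definition dH {R : realType} {s : nat} (z : 'I_s -> R) (k : 'I_s) : R :=
  derive1 (fun t : R => entropyH (fun j => z j + (if j == k then t else 0))) 0.

Definition gradH {R : realType} {s : nat} (z : 'I_s -> R) (k : 'I_s) : \bar R :=
  if 0 < z k then (dH z k)%:E else +oo%E.

Definition ztilde {R : realType} {s : nat} (eta : R) (z : 'I_s -> R) (k : 'I_s) : R :=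
  if z k == 0 then 0 else Num.max (z k - eta * dH z k) 0.

From HB Require Import structures.
From mathcomp Require Import all_boot all_order all_algebra.
From mathcomp Require Import all_classical all_reals all_analysis.
From mathcomp Require Import ring.
Import Order.TTheory GRing.Theory Num.Theory.
Local Open Scope ring_scope.

(* Writing S for the total mass and p = z / S, the partial derivatives of the
   entropy at a point with z_k > 0 are
     dH/dz_k = (\sum_i z_i (ln p_i - ln p_k)) / S^2,
   a nonnegative combination of the gaps ln p_i - ln p_k over the nonzero
   entries.  At a smallest nonzero entry all gaps are >= 0, and the gap to an
   entry of a different value is > 0, so the derivative is positive and the
   gradient step shrinks that entry; at a largest entry all gaps are <= 0 with
   one < 0, so the derivative is negative and the step enlarges it. *)

Section EntropyGradient.
Context {R : realType}.

Lemma xlnxE (x : R) : xlnx x = x * ln x.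
Proof. by rewrite /xlnx; case: eqP => [->|]; rewrite ?mul0r. Qed.

Lemma is_derive_xlnx [f : R -> R] [x df : R] :
  is_derive x 1 f df -> 0 < f x -> is_derive x 1 (xlnx \o f) ((ln (f x) + 1) * df).
Proof.
move=> f_df fx_gt0.
have -> : xlnx \o f = f * (@ln R \o f) by apply/funext => t; rewrite /= xlnxE.
apply: is_derive_eq (is_deriveM f_df (is_derive1_comp (is_derive1_ln fx_gt0) f_df)) _.
by rewrite /GRing.scale /= mulrA mulfV ?gt_eqF // mul1r mulrDl mul1r addrC.
Qed.

Lemma is_derive_affine_ratio (a c S : R) [x : R] : S + x != 0 ->
  is_derive x 1 (fun t => (a + c * t) / (S + t)) ((c * S - a) / (S + x) ^+ 2).
Proof.
move=> Sx_neq0.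
have num_d : is_derive x 1 (cst a + c *: id) (0 + c *: (1 : R)).
  by apply: is_deriveD; apply: is_deriveZ.
have den_d : is_derive x 1 (cst S + id) (0 + (1 : R)) by apply: is_deriveD.
apply: is_derive_eq (is_deriveM num_d (is_deriveV Sx_neq0 den_d)) _.
have -> : (cst a + c \*: id) x = a + c * x by [].
by rewrite /GRing.scale /=; field.
Qed.

Lemma sumr_weighted_gt0 (I : finType) (w x : I -> R) :
  (forall i, 0 <= w i) -> (forall i, w i != 0 -> 0 <= x i) ->
  (exists j, 0 < w j /\ 0 < x j) -> 0 < \sum_i w i * x i.
Proof.
move=> w_ge0 x_ge0 [j [wj_gt0 xj_gt0]].
rewrite (bigD1 j) //=; apply: ltr_pwDl; first exact: mulr_gt0.
apply: sumr_ge0 => i _; have [->|wi_neq0] := eqVneq (w i) 0; first by rewrite mul0r.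
by rewrite mulr_ge0 ?x_ge0.
Qed.

Lemma ler_ln_div (S a b : R) : 0 < S -> 0 < a -> 0 < b ->
  (ln (a / S) <= ln (b / S)) = (a <= b).
Proof. by move=> S_gt0 a_gt0 b_gt0; rewrite ler_ln ?posrE ?divr_gt0 // ler_pM2r ?invr_gt0. Qed.

Lemma ltr_ln_div (S a b : R) : 0 < S -> 0 < a -> 0 < b ->
  (ln (a / S) < ln (b / S)) = (a < b).
Proof. by move=> S_gt0 a_gt0 b_gt0; rewrite ltr_ln ?posrE ?divr_gt0 // ltr_pM2r ?invr_gt0. Qed.

Lemma gradHE s (z : 'I_s -> R) (k : 'I_s) : 0 < z k -> gradH z k = (dH z k)%:E.
Proof. by rewrite /gradH => ->. Qed.

Lemma ztilde_lt s (eta : R) (z : 'I_s -> R) (k : 'I_s) :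
  0 < eta -> 0 < z k -> 0 < dH z k -> ztilde eta z k < z k.
Proof.
move=> eta_gt0 zk_gt0 dH_gt0.
by rewrite /ztilde gt_eqF // gt_max zk_gt0 andbT ltrBlDr ltrDl mulr_gt0.
Qed.

Lemma ztilde_gt s (eta : R) (z : 'I_s -> R) (k : 'I_s) :
  0 < eta -> 0 < z k -> dH z k < 0 -> z k < ztilde eta z k.
Proof.
move=> eta_gt0 zk_gt0 dH_lt0.
by rewrite /ztilde gt_eqF // lt_max ltrDl -mulrN mulr_gt0 ?oppr_gt0.
Qed.

Section Gradient.
Context {s : nat} {z : 'I_s -> R}.
Hypothesis z_ge0 : forall j, 0 <= z j.
Local Notation S := (\sum_(j < s) z j).
Hypothesis S_gt0 : 0 < S.

Lemma nonzero_entry_gt0 [j : 'I_s] : z j != 0 -> 0 < z j.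
Proof. by rewrite lt_neqAle eq_sym z_ge0 andbT. Qed.

Lemma entropyH_shift (k : 'I_s) (t : R) :
  entropyH (fun j => z j + (if j == k then t else 0)) =
  - \sum_(i < s) xlnx ((z i + (i == k)%:R * t) / (S + t)).
Proof.
rewrite /entropyH; have -> : \sum_(j < s) (z j + (if j == k then t else 0)) = S + t.
  by rewrite big_split /= -big_mkcond /= big_pred1_eq.
congr (- _); apply: eq_bigr => i _.
by case: (i == k); rewrite ?mul1r ?mul0r ?addr0.
Qed.

Lemma is_derive_entropy_term [k : 'I_s] : 0 < z k -> forall i : 'I_s,
  is_derive (0 : R) 1 (fun t => xlnx ((z i + (i == k)%:R * t) / (S + t)))
    ((ln (z i / S) + 1) * (((i == k)%:R * S - z i) / S ^+ 2)).
Proof.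
move=> zk_gt0 i; have S_neq0 : S + 0 != 0 by rewrite addr0 gt_eqF.
have [zi0|zi_neq0] := eqVneq (z i) 0.
  have ik : i != k by apply: contraTneq zk_gt0 => <-; rewrite zi0 ltxx.
  rewrite zi0 (negbTE ik) !mul0r subr0 mul0r mulr0.
  have -> : (fun t => xlnx ((0 + 0 * t) / (S + t))) = cst (0 : R).
    by apply/funext => t; rewrite mul0r add0r mul0r /xlnx eqxx.
  exact: is_derive_cst.
have zi_gt0 := nonzero_entry_gt0 zi_neq0.
have := is_derive_xlnx (is_derive_affine_ratio (z i) (i == k)%:R S S_neq0).
rewrite /= mulr0 !addr0; apply; exact: divr_gt0.
Qed.

Lemma dHE (k : 'I_s) : 0 < z k ->
  dH z k = (\sum_(i < s) z i * (ln (z i / S) - ln (z k / S))) / S ^+ 2.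
Proof.
move=> zk_gt0.
have dH_sum := is_deriveN (is_derive_sum (is_derive_entropy_term zk_gt0)).
rewrite /dH derive1E (_ : (fun t => _) =
  - \sum_i (fun t => xlnx ((z i + (i == k)%:R * t) / (S + t)))); last first.
  by apply/funext => t; rewrite entropyH_shift fct_sumE.
have sum_at_k (F : 'I_s -> R) : \sum_i F i * (i == k)%:R = F k.
  by rewrite (bigD1 k) //= eqxx mulr1 big1 ?addr0 // => i /negbTE ->; rewrite mulr0.
rewrite derive_val -sumrN (eq_bigr (fun i =>
  ((ln (z i / S) + 1) * z i - (ln (z i / S) + 1) * (i == k)%:R * S) / S ^+ 2)).
  rewrite -mulr_suml sumrB -mulr_suml sum_at_k mulr_sumr -sumrB.
  by congr (_ / _); apply: eq_bigr => i _; ring.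
by move=> i _; ring.
Qed.

Lemma max_entry_gt0 [k : 'I_s] : (forall j, z j <= z k) -> 0 < z k.
Proof.
move=> k_max; rewrite lt_neqAle z_ge0 andbT eq_sym.
apply: contraTneq S_gt0 => zk0; rewrite -leNgt big1 // => j _.
by apply/le_anti; rewrite z_ge0 -zk0 k_max.
Qed.

Lemma dH_gt0_at_min [i : 'I_s] : 0 < z i -> (forall j, z j != 0 -> z i <= z j) ->
  (exists j, z j != 0 /\ z j != z i) -> 0 < dH z i.
Proof.
move=> zi_gt0 i_min [j [zj_neq0 zj_neq_zi]].
rewrite dHE // divr_gt0 ?exprn_gt0 //.
apply: sumr_weighted_gt0 => [l | l zl_neq0 | ]; first exact: z_ge0.
  have zl_gt0 := nonzero_entry_gt0 zl_neq0.
  by rewrite subr_ge0 ler_ln_div ?i_min.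
have zj_gt0 := nonzero_entry_gt0 zj_neq0.
exists j; rewrite zj_gt0 subr_gt0 ltr_ln_div //.
by rewrite lt_neqAle eq_sym zj_neq_zi i_min.
Qed.

Lemma dH_lt0_at_max [k : 'I_s] : (forall j, z j <= z k) ->
  (exists j, z j != 0 /\ z j != z k) -> dH z k < 0.
Proof.
move=> k_max [j [zj_neq0 zj_neq_zk]]; have zk_gt0 := max_entry_gt0 k_max.
rewrite dHE // -oppr_gt0 -mulNr -sumrN divr_gt0 ?exprn_gt0 //.
under eq_bigr do rewrite -mulrN opprB.
apply: sumr_weighted_gt0 => [l | l zl_neq0 | ]; first exact: z_ge0.
  have zl_gt0 := nonzero_entry_gt0 zl_neq0.
  by rewrite subr_ge0 ler_ln_div ?k_max.
have zj_gt0 := nonzero_entry_gt0 zj_neq0.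
exists j; rewrite zj_gt0 subr_gt0 ltr_ln_div //.
by rewrite lt_neqAle zj_neq_zk k_max.
Qed.

End Gradient.
End EntropyGradient.

Theorem corollary2 (R : realType) (s : nat) (eta : R) (z : 'I_s -> R) :
  (2 <= s)%N -> 0 < eta ->
  (forall j, 0 <= z j) -> 0 < \sum_(j < s) z j ->
  (exists a b, [/\ z a != 0, z b != 0 & z a != z b]) ->
  (forall i : 'I_s, z i != 0 -> (forall j, z j != 0 -> z i <= z j) ->
     (0 < gradH z i)%E /\ ztilde eta z i < z i) /\
  (forall k : 'I_s, (forall j, z j <= z k) ->
     (gradH z k < 0)%E /\ z k < ztilde eta z k).
Proof.
(* [2 <= s] is implied by the two distinct nonzero entries. *)
move=> _ eta_gt0 z_ge0 S_gt0 [a [b [za_neq0 zb_neq0 zab]]].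
have other_entry v : exists j, z j != 0 /\ z j != v.
  have [<-|] := eqVneq (z a) v; last by exists a.
  by exists b; split; rewrite // eq_sym.
split=> [i zi_neq0 i_min | k k_max].
- have zi_gt0 := nonzero_entry_gt0 z_ge0 zi_neq0.
  have dH_gt0 := dH_gt0_at_min z_ge0 S_gt0 zi_gt0 i_min (other_entry _).
  by rewrite gradHE // lte_fin dH_gt0 ztilde_lt.
- have zk_gt0 := max_entry_gt0 z_ge0 S_gt0 k_max.
  have dH_lt0 := dH_lt0_at_max z_ge0 S_gt0 k_max (other_entry _).
  by rewrite gradHE // lte_fin dH_lt0 ztilde_gt.
Qed.
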